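(* Let $b,c\mid n$. For $\underline m\in\mathbb Z^{(b,c)}$ and $w\in\mathbb Z$, the chain map $[\underline m,w]:S^{\lambda_b}\to S^{\lambda_c}$ is chain homotopic to zero if and only if $\sum_im_i+(b,c)w=0$. Consequently, the rule sending the class of $[\underline m,w]$ to $\sum_im_i+(b,c)w$ is a well-defined isomorphism $[S^{\lambda_b},S^{\lambda_c}]\to\mathbb Z$.
   Context: $n$ is a fixed odd positive integer, $C_n$ cyclic of order $n$ with generator $t$; for $d\mid n$, $\Theta_d=C_n/\langle t^d\rangle$, $p$ denotes canonical projections $\Theta_d\to\Theta_e$ ($e\mid d$), $\pi_d:\Theta_d\to\Theta_1$ the projection to a point, and $t$ the action of the generator. $\underline{\mathbb Z}$ is the constant Mackey functor for $C_n$ with value $\mathbb Z$, $\underline{\mathbb Z}$-modules are modules over it, with restriction $f^*$ and transfer $f_*$. $F_d$ is the free $\underline{\mathbb Z}$-module on $g_d\in F_d(\Theta_d)$ ($F_1=\underline{\mathbb Z}$); for $f:\Theta_d\to\Theta_e$, $Rf:F_d\to F_e$ sends $g_d\mapsto f^*(g_e)$ and $If:F_e\to F_d$ sends $g_e\mapsto f_*(g_d)$. For $b\mid n$, $S^{\lambda_b}$ is the chain complex $F_b\xrightarrow{\mathrm{id}-Rt}F_b\xrightarrow{R\pi_b}\underline{\mathbb Z}$ in homological degrees $2,1,0$; $[X,Y]$ denotes morphisms in the derived category of $\underline{\mathbb Z}$-modules (for these bounded free complexes, chain homotopy classes of chain maps). Let $(b,c)$, $[b,c]$ be gcd and lcm.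 For $\underline m=(m_0,\dots,m_{(b,c)-1})\in\mathbb Z^{(b,c)}$, $\langle\underline m\rangle:F_b\to F_c$ is the map $g_b\mapsto\sum_im_i(t_* )^ip_*p^*(g_c)$, where $p^*$ is restriction along $\Theta_{[b,c]}\to\Theta_c$ and $p_*$ transfer along $\Theta_{[b,c]}\to\Theta_b$ (every map $F_b\to F_c$ is uniquely of this form). $I\pi R\pi:F_b\to F_c$ is $I\pi_c\circ R\pi_b$. For $w\in\mathbb Z$, $[\underline m,w]:S^{\lambda_b}\to S^{\lambda_c}$ is the chain map equal to $\langle\underline m\rangle+w\,I\pi R\pi$ in degree 2, $\langle\underline m\rangle$ in degree 1, and multiplication by $\frac{c}{(b,c)}\sum_im_i$ in degree 0; every chain map $S^{\lambda_b}\to S^{\lambda_c}$ has this form. *)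

(* Z-modules (= modules over the constant Mackey functor Z
   for C_n = cohomological Mackey functors for C_n), described on the orbits
   Theta_d = C_n/<t^d> (d | n). *)
From mathcomp Require Import all_boot all_order all_algebra.
Set Implicit Arguments. Unset Strict Implicit. Unset Printing Implicit Defensive.
Import Order.TTheory GRing.Theory Num.Theory.
Local Open Scope ring_scope.

(* Data of a Mackey functor on the orbits Theta_d:
   M d      = M(Theta_d)
   res d e  = p^*  : M(Theta_e) -> M(Theta_d)   for p : Theta_d -> Theta_e (e | d)
   tr d e   = p_*  : M(Theta_d) -> M(Theta_e)
   cov d    = t_*  : M(Theta_d) -> M(Theta_d)   (t = action of the generator)
   con d    = t^*  : M(Theta_d) -> M(Theta_d) *)
Record mackey := Mackey {
  mval :> nat -> zmodType;
  res : forall d e : nat, mval e -> mval d;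
  tr  : forall d e : nat, mval d -> mval e;
  cov : forall d : nat, mval d -> mval d;
  con : forall d : nat, mval d -> mval d }.
Arguments res : clear implicits.
Arguments tr : clear implicits.
Arguments cov : clear implicits.
Arguments con : clear implicits.

(* Axioms of a Mackey functor for C_n (on the orbit category, whose maps are
   generated by the projections p and the action t), plus the cohomological
   condition p_* p^* = multiplication by the index, which characterizes
   modules over the constant Mackey functor Z. *)
Definition is_Zmodule (n : nat) (M : mackey) : Prop :=
  [/\ (forall d e, (e %| d)%N -> (d %| n)%N ->
         {morph res M d e : x y / x - y} /\ {morph tr M d e : x y / x - y}),
      (forall d, (d %| n)%N ->
         [/\ {morph cov M d : x y / x - y}, {morph con M d : x y / x - y},
             res M d d =1 id & tr M d d =1 id]),
      (forall d e f, (f %| e)%N -> (e %| d)%N -> (d %| n)%N ->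
         (forall x, res M d e (res M e f x) = res M d f x) /\
         (forall x, tr M e f (tr M d e x) = tr M d f x)),
      (forall d, (d %| n)%N ->
         [/\ (forall x, cov M d (con M d x) = x),
             (forall x, con M d (cov M d x) = x) &
             (forall x, iter d (cov M d) x = x)]) &
      (forall d e, (e %| d)%N -> (d %| n)%N ->
         (forall x, tr M d e (cov M d x) = cov M e (tr M d e x)) /\
         (forall x, res M d e (con M e x) = con M d (res M d e x)))] /\
  [/\ (* Mackey double coset formula for Theta_d -> Theta_e <- Theta_d' *)
      (forall d d' e, (e %| d)%N -> (e %| d')%N -> (d %| n)%N -> (d' %| n)%N ->
         forall x, res M d' e (tr M d e x) =
           \sum_(j < (gcdn d d' %/ e)%N)
              tr M (lcmn d d') d'
                 (iter (j * e) (cov M (lcmn d d')) (res M (lcmn d d') d x))) &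
      (forall d e, (e %| d)%N -> (d %| n)%N ->
         forall x, tr M d e (res M d e x) = x *+ (d %/ e))].

Definition Zconst : mackey :=
  @Mackey (fun _ => int : zmodType)
    (fun d e (x : int) => x)
    (fun d e (x : int) => x *+ (d %/ e))
    (fun d (x : int) => x)
    (fun d (x : int) => x).

Definition is_mor (n : nat) (M N : mackey) (phi : forall d, M d -> N d) : Prop :=
  (forall d, (d %| n)%N ->
     {morph phi d : x y / x - y} /\
     (forall x, phi d (cov M d x) = cov N d (phi d x))) /\
  (forall d e, (e %| d)%N -> (d %| n)%N ->
     (forall x, phi d (res M d e x) = res N d e (phi e x)) /\
     (forall x, phi e (tr M d e x) = tr N d e (phi d x))).

Arguments is_mor : clear implicits.

Definition meq (n : nat) (M N : mackey) (phi psi : forall d, M d -> N d) : Prop :=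
  forall d, (d %| n)%N -> forall x, phi d x = psi d x.

Definition mcomp (M N P : mackey) (psi : forall d, N d -> P d)
  (phi : forall d, M d -> N d) : forall d, M d -> P d :=
  fun d x => psi d (phi d x).
Definition madd (M N : mackey) (phi psi : forall d, M d -> N d) :
  forall d, M d -> N d := fun d x => phi d x + psi d x.
Definition msub (M N : mackey) (phi psi : forall d, M d -> N d) :
  forall d, M d -> N d := fun d x => phi d x - psi d x.
Definition mscale (M N : mackey) (w : int) (phi : forall d, M d -> N d) :
  forall d, M d -> N d := fun d x => phi d x *~ w.

Definition is_free (n : nat) (F : mackey) (d : nat) (g : F d) : Prop :=
  is_Zmodule n F /\
  forall M : mackey, is_Zmodule n M -> forall x : M d,
    exists phi : forall e, F e -> M e,
      [/\ is_mor n F M phi, phi d g = x &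
          forall psi : forall e, F e -> M e,
            is_mor n F M psi -> psi d g = x -> meq n psi phi].

(* The differentials of S^{lambda_b} = (F_b --id-Rt--> F_b --R pi_b--> Z):
   D = id - Rt : g_b |-> g_b - t^*(g_b),   E = R pi_b : g_b |-> pi_b^*(g_1), g_1 = 1. *)
Definition sphere_diffs (n : nat) (F : mackey) (b : nat) (g : F b)
  (D : forall d, F d -> F d) (E : forall d, F d -> Zconst d) : Prop :=
  [/\ is_mor n F F D, D b g = g - con F b g,
      is_mor n F Zconst E & E b g = res Zconst b 1 (1%R : int)].

Definition is_Ipi (n : nat) (F : mackey) (c : nat) (g : F c)
  (I : forall d, Zconst d -> F d) : Prop :=
  is_mor n Zconst F I /\ I 1%N (1%R : int) = tr F c 1 g.

(* <m> : F_b -> F_c, g_b |-> sum_i m_i (t_* )^i p_* p^* (g_c),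
   p^* along Theta_[b,c] -> Theta_c and p_* along Theta_[b,c] -> Theta_b. *)
Definition is_angle (n : nat) (Fb : mackey) (b : nat) (gb : Fb b)
  (Fc : mackey) (c : nat) (gc : Fc c) (m : 'I_(gcdn b c) -> int)
  (B : forall d, Fb d -> Fc d) : Prop :=
  is_mor n Fb Fc B /\
  B b gb = \sum_(i < gcdn b c)
             iter i (cov Fc b) (tr Fc (lcmn b c) b (res Fc (lcmn b c) c gc)) *~ m i.

Definition is_chain_map (n : nat) (Fb Fc : mackey)
  (Db : forall d, Fb d -> Fb d) (Eb : forall d, Fb d -> Zconst d)
  (Dc : forall d, Fc d -> Fc d) (Ec : forall d, Fc d -> Zconst d)
  (f2 f1 : forall d, Fb d -> Fc d) (f0 : forall d, Zconst d -> Zconst d) : Prop :=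
  [/\ is_mor n Fb Fc f2, is_mor n Fb Fc f1, is_mor n Zconst Zconst f0,
      meq n (mcomp Dc f2) (mcomp f1 Db) & meq n (mcomp Ec f1) (mcomp f0 Eb)].

Definition null_homotopic (n : nat) (Fb Fc : mackey)
  (Db : forall d, Fb d -> Fb d) (Eb : forall d, Fb d -> Zconst d)
  (Dc : forall d, Fc d -> Fc d) (Ec : forall d, Fc d -> Zconst d)
  (f2 f1 : forall d, Fb d -> Fc d) (f0 : forall d, Zconst d -> Zconst d) : Prop :=
  exists (h1 : forall d, Fb d -> Fc d) (h0 : forall d, Zconst d -> Fc d),
    [/\ is_mor n Fb Fc h1, is_mor n Zconst Fc h0,
        meq n f2 (mcomp h1 Db),
        meq n f1 (madd (mcomp Dc h1) (mcomp h0 Eb)) &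
        meq n f0 (mcomp Ec h0)].

Definition homotopic (n : nat) (Fb Fc : mackey)
  (Db : forall d, Fb d -> Fb d) (Eb : forall d, Fb d -> Zconst d)
  (Dc : forall d, Fc d -> Fc d) (Ec : forall d, Fc d -> Zconst d)
  (f2 f1 : forall d, Fb d -> Fc d) (f0 : forall d, Zconst d -> Zconst d)
  (f2' f1' : forall d, Fb d -> Fc d) (f0' : forall d, Zconst d -> Zconst d) : Prop :=
  null_homotopic n Db Eb Dc Ec (msub f2 f2') (msub f1 f1') (msub f0 f0').

Definition deg0_map (b c : nat) (m : 'I_(gcdn b c) -> int) :
  forall d, Zconst d -> Zconst d :=
  fun d (k : Zconst d) => k *~ ((c %/ gcdn b c)%:Z * \sum_(i < gcdn b c) m i).

(* The chain map [m, w] given <m> = B and I pi_c = I, R pi_b = Eb. *)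
Definition bracket2 (Fb Fc : mackey) (B : forall d, Fb d -> Fc d)
  (I : forall d, Zconst d -> Fc d) (Eb : forall d, Fb d -> Zconst d) (w : int) :
  forall d, Fb d -> Fc d := madd B (mscale w (mcomp I Eb)).

(* Since F_b is free on g_b, a chain map (f2, f1, f0) : S^{lambda_b} -> S^{lambda_c}
   is governed by y = f2(g_b) in F_c(Theta_b), and it is null-homotopic iff
   eps(y) = 0, where eps = R pi_c.  Three facts about F_c(Theta_b) give this:
   it is spanned by the translates t^i v (i < (b,c)) of v = p_* p^*(g_c), because
   the sub-Mackey functor they span contains g_c; the kernel of eps is the image
   of 1 - t^*; and the t^*-fixed elements are the multiples of the norm
   pi_b^* pi_{c*}(g_c), as one sees by mapping F_c to the permutation module
   Z[Theta_c] with g_c sent to the indicator of the base point.  As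
   eps(t^i v) = c/(b,c), the degree eps(f2 g_b) / (c/(b,c)) is an additive,
   surjective, complete homotopy invariant, and on [m, w] it is sum_i m_i + (b,c) w. *)

From HB Require Import structures.
From mathcomp Require Import all_boot all_algebra.
From mathcomp Require Import zify boolp.
Set Implicit Arguments. Unset Strict Implicit. Unset Printing Implicit Defensive.
Import GRing.Theory.
Local Open Scope ring_scope.

Section ZmodMorphism.
Variables (U V : zmodType) (f : U -> V).
Hypothesis fB : {morph f : x y / x - y}.
Let fA : {additive U -> V} := HB.pack f (GRing.isZmodMorphism.Build U V f fB).

Lemma zmorph0 : f 0 = 0. Proof. exact: (raddf0 fA). Qed.
Lemma zmorphD x y : f (x + y) = f x + f y. Proof. exact: (raddfD fA). Qed.
Lemma zmorph_sum (I : Type) (r : seq I) (P : pred I) (F : I -> U) :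
  f (\sum_(i <- r | P i) F i) = \sum_(i <- r | P i) f (F i).
Proof. exact: (raddf_sum fA). Qed.
Lemma zmorphMn x k : f (x *+ k) = f x *+ k. Proof. exact: (raddfMn fA). Qed.
Lemma zmorphMz x (k : int) : f (x *~ k) = f x *~ k. Proof. exact: (raddfMz fA). Qed.
End ZmodMorphism.

Lemma iter_commute (T U : Type) (h : T -> T) (h' : U -> U) (f : T -> U) k x :
  (forall y, f (h y) = h' (f y)) -> f (iter k h x) = iter k h' (f x).
Proof. by move=> fh; elim: k => //= k <-. Qed.

Lemma iter_mul_fix (T : Type) (f : T -> T) p k y :
  iter p f y = y -> iter (k * p) f y = y.
Proof. by move=> fy; elim: k => // k IH; rewrite mulSn iterD IH fy. Qed.

Section ZmoduleTheory.
Variables (n : nat) (M : mackey).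
Hypothesis HM : is_Zmodule n M.

Lemma resB d e : (e %| d)%N -> (d %| n)%N -> {morph res M d e : x y / x - y}.
Proof. by case: HM => [[H _ _ _ _] _] ed dn; case: (H d e ed dn). Qed.
Lemma trB d e : (e %| d)%N -> (d %| n)%N -> {morph tr M d e : x y / x - y}.
Proof. by case: HM => [[H _ _ _ _] _] ed dn; case: (H d e ed dn). Qed.
Lemma covB d : (d %| n)%N -> {morph cov M d : x y / x - y}.
Proof. by case: HM => [[_ H _ _ _] _] dn; case: (H d dn). Qed.
Lemma conB d : (d %| n)%N -> {morph con M d : x y / x - y}.
Proof. by case: HM => [[_ H _ _ _] _] dn; case: (H d dn). Qed.
Lemma res_id d x : (d %| n)%N -> res M d d x = x.
Proof. by case: HM => [[_ H _ _ _] _] dn; case: (H d dn). Qed.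
Lemma tr_id d x : (d %| n)%N -> tr M d d x = x.
Proof. by case: HM => [[_ H _ _ _] _] dn; case: (H d dn). Qed.
Lemma res_res d e f x : (f %| e)%N -> (e %| d)%N -> (d %| n)%N ->
  res M d e (res M e f x) = res M d f x.
Proof. by case: HM => [[_ _ H _ _] _] fe ed dn; case: (H d e f fe ed dn). Qed.
Lemma tr_tr d e f x : (f %| e)%N -> (e %| d)%N -> (d %| n)%N ->
  tr M e f (tr M d e x) = tr M d f x.
Proof. by case: HM => [[_ _ H _ _] _] fe ed dn; case: (H d e f fe ed dn). Qed.
Lemma cov_con d x : (d %| n)%N -> cov M d (con M d x) = x.
Proof. by case: HM => [[_ _ _ H _] _] dn; case: (H d dn). Qed.
Lemma con_cov d x : (d %| n)%N -> con M d (cov M d x) = x.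
Proof. by case: HM => [[_ _ _ H _] _] dn; case: (H d dn). Qed.
Lemma iter_cov_period d x : (d %| n)%N -> iter d (cov M d) x = x.
Proof. by case: HM => [[_ _ _ H _] _] dn; case: (H d dn). Qed.
Lemma tr_cov d e x : (e %| d)%N -> (d %| n)%N ->
  tr M d e (cov M d x) = cov M e (tr M d e x).
Proof. by case: HM => [[_ _ _ _ H] _] ed dn; case: (H d e ed dn). Qed.
Lemma res_con d e x : (e %| d)%N -> (d %| n)%N ->
  res M d e (con M e x) = con M d (res M d e x).
Proof. by case: HM => [[_ _ _ _ H] _] ed dn; case: (H d e ed dn). Qed.
Lemma res_tr d d' e x : (e %| d)%N -> (e %| d')%N -> (d %| n)%N -> (d' %| n)%N ->
  res M d' e (tr M d e x) =
  \sum_(j < (gcdn d d' %/ e)%N)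
     tr M (lcmn d d') d' (iter (j * e) (cov M (lcmn d d')) (res M (lcmn d d') d x)).
Proof. by case: HM => [_ [H _]] ? ? ? ?; apply: H. Qed.
Lemma tr_res d e x : (e %| d)%N -> (d %| n)%N -> tr M d e (res M d e x) = x *+ (d %/ e).
Proof. by case: HM => [_ [_ H]] ? ?; apply: H. Qed.

Lemma res_cov d e x : (e %| d)%N -> (d %| n)%N ->
  res M d e (cov M e x) = cov M d (res M d e x).
Proof.
by move=> ed dn; rewrite -[LHS](cov_con _ dn) -res_con // con_cov ?(dvdn_trans ed).
Qed.
Lemma res_iter_cov d e k x : (e %| d)%N -> (d %| n)%N ->
  res M d e (iter k (cov M e) x) = iter k (cov M d) (res M d e x).
Proof. by move=> ed dn; apply: iter_commute => y; apply: res_cov. Qed.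
Lemma tr_iter_cov d e k x : (e %| d)%N -> (d %| n)%N ->
  tr M d e (iter k (cov M d) x) = iter k (cov M e) (tr M d e x).
Proof. by move=> ed dn; apply: iter_commute => y; apply: tr_cov. Qed.

Hypothesis n_gt0 : (0 < n)%N.

Lemma con_iter_cov d x : (d %| n)%N -> con M d x = iter d.-1 (cov M d) x.
Proof.
move=> dn; rewrite -{1}(iter_cov_period x dn) -[d in iter d](prednK (dvdn_gt0 n_gt0 dn)).
by rewrite con_cov.
Qed.
End ZmoduleTheory.

Section Morphisms.
Variables (n : nat) (M N : mackey).

Lemma morB phi d : is_mor n M N phi -> (d %| n)%N -> {morph phi d : x y / x - y}.
Proof. by case=> H _ dn; case: (H d dn). Qed.
Lemma mor_cov phi d x : is_mor n M N phi -> (d %| n)%N ->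
  phi d (cov M d x) = cov N d (phi d x).
Proof. by case=> H _ dn; case: (H d dn). Qed.
Lemma mor_res phi d e x : is_mor n M N phi -> (e %| d)%N -> (d %| n)%N ->
  phi d (res M d e x) = res N d e (phi e x).
Proof. by case=> _ H ed dn; case: (H d e ed dn). Qed.
Lemma mor_tr phi d e x : is_mor n M N phi -> (e %| d)%N -> (d %| n)%N ->
  phi e (tr M d e x) = tr N d e (phi d x).
Proof. by case=> _ H ed dn; case: (H d e ed dn). Qed.
Lemma mor_iter_cov phi d k x : is_mor n M N phi -> (d %| n)%N ->
  phi d (iter k (cov M d) x) = iter k (cov N d) (phi d x).
Proof. by move=> Hphi dn; apply: iter_commute => y; apply: mor_cov. Qed.
Lemma mor_con phi d x : is_Zmodule n M -> is_Zmodule n N -> (0 < n)%N ->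
  is_mor n M N phi -> (d %| n)%N -> phi d (con M d x) = con N d (phi d x).
Proof.
move=> HM HN n_gt0 Hphi dn.
by rewrite (con_iter_cov HM n_gt0 _ dn) (con_iter_cov HN n_gt0 _ dn) mor_iter_cov.
Qed.

Lemma mor_id : is_mor n M M (fun d x => x).
Proof. by split. Qed.

End Morphisms.

Lemma mor_comp n (M N P : mackey) phi psi : is_mor n M N phi -> is_mor n N P psi ->
  is_mor n M P (mcomp psi phi).
Proof.
move=> H1 H2; rewrite /mcomp; split.
  move=> d dn; split; first by move=> x y; rewrite (morB H1 dn) (morB H2 dn).
  by move=> x; rewrite (mor_cov _ H1 dn) (mor_cov _ H2 dn).
move=> d e ed dn; split=> x.
  by rewrite (mor_res _ H1 ed dn) (mor_res _ H2 ed dn).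
by rewrite (mor_tr _ H1 ed dn) (mor_tr _ H2 ed dn).
Qed.

Section MorphismArith.
Variables (n : nat) (M N : mackey).
Hypothesis HN : is_Zmodule n N.

Lemma mor_add phi psi : is_mor n M N phi -> is_mor n M N psi -> is_mor n M N (madd phi psi).
Proof.
move=> H1 H2; rewrite /madd; split.
  move=> d dn; split.
    by move=> x y; rewrite (morB H1 dn) (morB H2 dn) opprD addrACA.
  by move=> x; rewrite (mor_cov _ H1 dn) (mor_cov _ H2 dn) (zmorphD (covB HN dn)).
move=> d e ed dn; split=> x.
  by rewrite (mor_res _ H1 ed dn) (mor_res _ H2 ed dn) (zmorphD (resB HN ed dn)).
by rewrite (mor_tr _ H1 ed dn) (mor_tr _ H2 ed dn) (zmorphD (trB HN ed dn)).
Qed.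

Lemma mor_sub phi psi : is_mor n M N phi -> is_mor n M N psi -> is_mor n M N (msub phi psi).
Proof.
move=> H1 H2; rewrite /msub; split.
  move=> d dn; split.
    by move=> x y; rewrite (morB H1 dn) (morB H2 dn) opprD addrACA -opprD.
  by move=> x; rewrite (mor_cov _ H1 dn) (mor_cov _ H2 dn) (covB HN dn).
move=> d e ed dn; split=> x.
  by rewrite (mor_res _ H1 ed dn) (mor_res _ H2 ed dn) (resB HN ed dn).
by rewrite (mor_tr _ H1 ed dn) (mor_tr _ H2 ed dn) (trB HN ed dn).
Qed.

Lemma mor_scale w phi : is_mor n M N phi -> is_mor n M N (mscale w phi).
Proof.
move=> H1; rewrite /mscale; split.
  move=> d dn; split; first by move=> x y; rewrite (morB H1 dn) mulrzBl.
  by move=> x; rewrite (mor_cov _ H1 dn) (zmorphMz (covB HN dn)).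
move=> d e ed dn; split=> x.
  by rewrite (mor_res _ H1 ed dn) (zmorphMz (resB HN ed dn)).
by rewrite (mor_tr _ H1 ed dn) (zmorphMz (trB HN ed dn)).
Qed.
End MorphismArith.

Lemma con_mor n (M : mackey) : is_Zmodule n M -> is_mor n M M (fun d => con M d).
Proof.
move=> HM; split.
  move=> d dn; split; first exact: (conB HM dn).
  by move=> x; rewrite (con_cov HM _ dn) (cov_con HM _ dn).
move=> d e ed dn; have en := dvdn_trans ed dn; split=> x; first by rewrite (res_con HM).
by rewrite -[in LHS](cov_con HM x dn) (tr_cov HM) // (con_cov HM).
Qed.

Lemma Zconst_scale_mor n (k : int) : is_mor n Zconst Zconst (fun d (x : Zconst d) => x *~ k).
Proof.
split; first by move=> d dn; split=> [x y|x] //=; rewrite mulrzBl.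
by move=> d e ed dn; split=> x //=; rewrite !mulrzz mulrnAl.
Qed.

Section Free.
Variables (n : nat) (F : mackey) (d : nat) (g : F d).
Hypothesis Ffree : is_free n g.

Lemma free_Zmodule : is_Zmodule n F.
Proof. by case: Ffree. Qed.

Lemma free_lift (M : mackey) (x : M d) : is_Zmodule n M ->
  exists phi, is_mor n F M phi /\ phi d g = x.
Proof. by case: Ffree => _ H HM; case: (H M HM x) => phi [? ? _]; exists phi. Qed.

Lemma free_uniq (M : mackey) phi psi : is_Zmodule n M ->
  is_mor n F M phi -> is_mor n F M psi -> phi d g = psi d g -> meq n phi psi.
Proof.
case: Ffree => _ H HM H1 H2 E; case: (H M HM (psi d g)) => chi [_ _ U].
by move=> e en x; rewrite (U _ H1 E e en) (U _ H2 erefl e en).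
Qed.
End Free.

Lemma Zconst_mor_uniq n (N : mackey) (phi psi : forall d, Zconst d -> N d) :
  is_mor n Zconst N phi -> is_mor n Zconst N psi ->
  phi 1%N 1 = psi 1%N 1 -> meq n phi psi.
Proof.
move=> H1 H2 E d dn k.
have -> : k = res Zconst d 1 ((1 : int) *~ k) by rewrite /= intz.
rewrite (mor_res _ H1 _ dn) ?dvd1n // (mor_res _ H2 _ dn) ?dvd1n //.
by rewrite (zmorphMz (morB H1 (dvd1n n))) (zmorphMz (morB H2 (dvd1n n))) E.
Qed.

Lemma divn_mul_divn d e f : (f %| e)%N -> (e %| d)%N -> (d %/ e * (e %/ f) = d %/ f)%N.
Proof. by move=> fe ed; rewrite muln_divA // divnK. Qed.

Lemma lcmn_divr d d' : (0 < d')%N -> (lcmn d d' %/ d' = d %/ gcdn d d')%N.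
Proof.
move=> d'_gt0; apply/eqP; rewrite -(eqn_pmul2r d'_gt0) divnK ?dvdn_lcmr //.
by rewrite /lcmn -divn_mulAC ?dvdn_gcdl.
Qed.

Lemma Zconst_Zmodule n : (0 < n)%N -> is_Zmodule n Zconst.
Proof.
move=> n_gt0; have pos d : (d %| n)%N -> (0 < d)%N by apply: dvdn_gt0.
split; first split.
- by move=> d e ed dn; split=> //= x y; apply: mulrnBl.
- by move=> d dn /=; split=> // x; rewrite divnn pos.
- by move=> d e f fe ed dn /=; split=> // x; rewrite -mulrnA divn_mul_divn.
- by move=> d dn /=; split=> // x; apply: iter_fix.
- by [].
split=> [d d' e ed ed' dn dn' x /=|//].
under eq_bigr do rewrite iter_fix //.
rewrite sumr_const card_ord -mulrnA lcmn_divr ?pos //.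
by rewrite divn_mul_divn ?dvdn_gcdl ?dvdn_gcd ?ed.
Qed.

Section Span.
Variables (c : nat) (F : mackey) (g : F c).

Definition vgen d : F d := tr F (lcmn d c) d (res F (lcmn d c) c g).

Definition in_span d (y : F d) : Prop :=
  exists s : seq (nat * int), y = \sum_(p <- s) iter p.1 (cov F d) (vgen d) *~ p.2.

Lemma span0 d : in_span (0 : F d).
Proof. by exists [::]; rewrite big_nil. Qed.
Lemma spanD d (y z : F d) : in_span y -> in_span z -> in_span (y + z).
Proof. by case=> s1 -> [s2 ->]; exists (s1 ++ s2); rewrite big_cat. Qed.
Lemma spanMz d (y : F d) k : in_span y -> in_span (y *~ k).
Proof.
case=> s ->; exists [seq (p.1, p.2 * k) | p <- s]; rewrite big_map.
rewrite (zmorph_sum (fun x y => mulrzBl x y k)); apply: eq_bigr => p _ /=.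
by rewrite mulrzA.
Qed.
Lemma spanB d (y z : F d) : in_span y -> in_span z -> in_span (y - z).
Proof. by move=> Hy Hz; apply: spanD => //; rewrite -mulrN1z; apply: spanMz. Qed.
Lemma span_sum d (I : Type) (r : seq I) (P : pred I) (G : I -> F d) :
  (forall i, in_span (G i)) -> in_span (\sum_(i <- r | P i) G i).
Proof.
move=> HG; elim: r => [|a r IH]; first by rewrite big_nil; apply: span0.
by rewrite big_cons; case: (P a) => //; apply: spanD.
Qed.
Lemma span_iter_vgen d k : in_span (iter k (cov F d) (vgen d)).
Proof. by exists [:: (k, 1)]; rewrite big_seq1. Qed.
Lemma span_zmorph d e (f : F d -> F e) (y : F d) : {morph f : x y / x - y} ->
  (forall k, in_span (f (iter k (cov F d) (vgen d)))) -> in_span y -> in_span (f y).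
Proof.
move=> fB Hf [s ->]; rewrite (zmorph_sum fB); apply: span_sum => p.
by rewrite (zmorphMz fB); apply: spanMz.
Qed.

Definition span_pred d : {pred F d} := fun y => `[< in_span y >].
Arguments span_pred : clear implicits.

Lemma span_pred_zmod_closed d : zmod_closed (span_pred d).
Proof.
split; first exact/asboolP/span0.
by move=> y z /asboolP Hy /asboolP Hz; apply/asboolP/spanB.
Qed.

HB.instance Definition _ (d : nat) :=
  GRing.isZmodClosed.Build (F d) (span_pred d) (span_pred_zmod_closed d).
Record span_elt d := SpanElt { span_val : F d; _ : span_val \in span_pred d }.
HB.instance Definition _ (d : nat) := [isSub for @span_val d].
HB.instance Definition _ (d : nat) := [Choice of span_elt d by <:].
HB.instance Definition _ (d : nat) := [SubChoice_isSubZmodule of span_elt d by <:].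

(* Values outside the span are replaced by the junk value 0, which never
   occurs by the closure lemmas [span_res], [span_tr], [span_iter], [span_con]. *)
Definition span_mackey : mackey :=
  @Mackey (fun d => span_elt d : zmodType)
    (fun d e x => insubd 0 (res F d e (val x)))
    (fun d e x => insubd 0 (tr F d e (val x)))
    (fun d x => insubd 0 (cov F d (val x)))
    (fun d x => insubd 0 (con F d (val x))).

Lemma span_valP d (x : span_elt d) : in_span (val x).
Proof. exact/asboolP/(valP x). Qed.
Lemma span_insubdK d (y : F d) : in_span y -> val (insubd 0 y : span_elt d) = y.
Proof. by move=> Hy; rewrite insubdK //; apply/asboolP. Qed.

Variable n : nat.
Hypotheses (Ffree : is_free n g) (n_gt0 : (0 < n)%N) (cn : (c %| n)%N).
Let HF : is_Zmodule n F := free_Zmodule Ffree.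

Lemma lcmn_dvd_n d : (d %| n)%N -> (lcmn d c %| n)%N.
Proof. by move=> dn; rewrite dvdn_lcm dn cn. Qed.

Lemma span_iter d k (y : F d) : (d %| n)%N -> in_span y -> in_span (iter k (cov F d) y).
Proof.
move=> dn Hy; elim: k => //= k; apply: span_zmorph (covB HF dn) _ => m.
exact: (span_iter_vgen d m.+1).
Qed.
Lemma span_con d (y : F d) : (d %| n)%N -> in_span y -> in_span (con F d y).
Proof. by move=> dn Hy; rewrite (con_iter_cov HF n_gt0 _ dn); apply: span_iter. Qed.

Lemma res_vgen d e : (e %| d)%N -> (d %| n)%N ->
  res F d e (vgen e) = \sum_(j < (gcdn (lcmn e c) d %/ e)%N) iter (j * e) (cov F d) (vgen d).
Proof.
move=> ed dn; have en := dvdn_trans ed dn.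
have ecd : lcmn (lcmn e c) d = lcmn d c by rewrite lcmnAC (lcmn_idPr ed).
rewrite /vgen (res_tr HF) ?dvdn_lcml ?lcmn_dvd_n //; apply: eq_bigr => j _.
have Ln : (lcmn (lcmn e c) d %| n)%N by rewrite ecd lcmn_dvd_n.
by rewrite (res_res HF) ?dvdn_lcmr ?dvdn_lcml // (tr_iter_cov HF) ?dvdn_lcmr // ecd.
Qed.

Lemma tr_vgen d e : (e %| d)%N -> (d %| n)%N ->
  tr F d e (vgen d) = vgen e *+ (lcmn d c %/ lcmn e c).
Proof.
move=> ed dn; have en := dvdn_trans ed dn.
have ecd : (lcmn e c %| lcmn d c)%N.
  by rewrite dvdn_lcm dvdn_lcmr (dvdn_trans ed) ?dvdn_lcml.
rewrite /vgen (tr_tr HF) ?dvdn_lcml ?lcmn_dvd_n //.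
rewrite -(tr_tr HF _ (dvdn_lcml e c) ecd) ?lcmn_dvd_n //.
rewrite -(res_res HF _ (dvdn_lcmr e c) ecd) ?lcmn_dvd_n // (tr_res HF) ?lcmn_dvd_n //.
by rewrite (zmorphMn (trB HF _ _)) ?dvdn_lcml ?lcmn_dvd_n.
Qed.

Lemma span_res d e (y : F e) : (e %| d)%N -> (d %| n)%N -> in_span y -> in_span (res F d e y).
Proof.
move=> ed dn; apply: span_zmorph (resB HF ed dn) _ => k.
rewrite (res_iter_cov HF) //; apply: span_iter => //.
by rewrite res_vgen //; apply: span_sum => j; apply: span_iter_vgen.
Qed.

Lemma span_tr d e (y : F d) : (e %| d)%N -> (d %| n)%N -> in_span y -> in_span (tr F d e y).
Proof.
move=> ed dn; have en := dvdn_trans ed dn; apply: span_zmorph (trB HF ed dn) _ => k.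
rewrite (tr_iter_cov HF) //; apply: span_iter => //.
by rewrite tr_vgen // pmulrn; apply: spanMz; apply: (span_iter_vgen e 0).
Qed.

Local Notation S := span_mackey.

Lemma span_valB d : {morph (val : S d -> F d) : x y / x - y}.
Proof. by []. Qed.
Lemma span_val_res d e (x : S e) : (e %| d)%N -> (d %| n)%N ->
  val (res S d e x) = res F d e (val x).
Proof. by move=> ed dn; rewrite span_insubdK //; apply/span_res/span_valP. Qed.
Lemma span_val_tr d e (x : S d) : (e %| d)%N -> (d %| n)%N ->
  val (tr S d e x) = tr F d e (val x).
Proof. by move=> ed dn; rewrite span_insubdK //; apply/span_tr/span_valP. Qed.
Lemma span_val_cov d (x : S d) : (d %| n)%N -> val (cov S d x) = cov F d (val x).
Proof. by move=> dn; rewrite span_insubdK //; apply: (span_iter 1 dn (span_valP x)). Qed.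
Lemma span_val_con d (x : S d) : (d %| n)%N -> val (con S d x) = con F d (val x).
Proof. by move=> dn; rewrite span_insubdK //; apply/span_con/span_valP. Qed.
Lemma span_val_iter_cov d k (x : S d) : (d %| n)%N ->
  val (iter k (cov S d) x) = iter k (cov F d) (val x).
Proof. by move=> dn; apply: iter_commute => y; apply: span_val_cov. Qed.

Lemma span_val_mor : is_mor n S F (fun d (x : S d) => val x).
Proof.
split=> [d dn|d e ed dn]; first by split=> [|x]; [exact: span_valB | apply: span_val_cov].
by split=> x; [apply: span_val_res | apply: span_val_tr].
Qed.

Lemma span_mackey_Zmodule : is_Zmodule n S.
Proof.
split; first split.
- move=> d e ed dn; have en := dvdn_trans ed dn.
  split=> x y; apply: val_inj; rewrite ?span_val_res ?span_val_tr // !span_valB.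
    by rewrite !span_val_res // (resB HF).
  by rewrite !span_val_tr // (trB HF).
- move=> d dn; split.
  + by move=> x y; apply: val_inj; rewrite span_val_cov // !span_valB !span_val_cov // (covB HF).
  + by move=> x y; apply: val_inj; rewrite span_val_con // !span_valB !span_val_con // (conB HF).
  + by move=> x; apply: val_inj; rewrite span_val_res // (res_id HF).
  + by move=> x; apply: val_inj; rewrite span_val_tr // (tr_id HF).
- move=> d e f fe ed dn; have en := dvdn_trans ed dn; have fd := dvdn_trans fe ed.
  split=> x; apply: val_inj; first by rewrite !span_val_res // (res_res HF).
  by rewrite !span_val_tr // (tr_tr HF).
- move=> d dn; split=> x; apply: val_inj.
  + by rewrite span_val_cov // span_val_con // (cov_con HF).
  + by rewrite span_val_con // span_val_cov // (con_cov HF).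
  + by rewrite span_val_iter_cov // (iter_cov_period HF).
- move=> d e ed dn; have en := dvdn_trans ed dn.
  split=> x; apply: val_inj.
  + by rewrite span_val_tr // span_val_cov // span_val_cov // span_val_tr // (tr_cov HF).
  + by rewrite span_val_res // span_val_con // span_val_con // span_val_res // (res_con HF).
split.
- move=> d d' e ed ed' dn dn' x; apply: val_inj.
  have L : (lcmn d d' %| n)%N by rewrite dvdn_lcm dn dn'.
  rewrite span_val_res // span_val_tr // (res_tr HF) //.
  rewrite (zmorph_sum (@span_valB d')); apply: eq_bigr => j _.
  by rewrite span_val_tr ?dvdn_lcmr // span_val_iter_cov // span_val_res ?dvdn_lcml.
- move=> d e ed dn x; apply: val_inj; have en := dvdn_trans ed dn.
  by rewrite span_val_tr // span_val_res // (tr_res HF) // (zmorphMn (@span_valB e)).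
Qed.

Lemma span_gen : in_span g.
Proof.
have := span_iter_vgen c 0; rewrite /vgen /=.
by rewrite (lcmn_idPl (dvdnn c)) (res_id HF) // (tr_id HF).
Qed.

(* The inclusion of the span is split by the lift of [g] along it, by
   uniqueness of maps out of the free module. *)
Theorem span_all d (y : F d) : (d %| n)%N -> in_span y.
Proof.
move=> dn; have [phi [Hphi phi_g]] := free_lift Ffree (insubd 0 g : S c) span_mackey_Zmodule.
have id_eq : meq n (mcomp (fun d (x : S d) => val x) phi) (fun d x => x).
  apply: (free_uniq Ffree HF (mor_comp Hphi span_val_mor) (mor_id n F)).
  by rewrite /mcomp phi_g span_insubdK //; apply: span_gen.
by rewrite -(id_eq d dn y) /mcomp; apply: span_valP.
Qed.
End Span.

Section NatSums.
Variable V : zmodType.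

Lemma sumr_nat_mul (H : nat -> V) p q :
  \sum_(0 <= k < p * q) H k = \sum_(0 <= j < p) \sum_(0 <= k < q) H (j + k * p)%N.
Proof.
elim: q => [|q IH].
  by rewrite muln0 big_geq // big1 // => j _; rewrite big_geq.
rewrite mulnS addnC (@big_cat_nat _ _ _ (p * q)) ?leq_addr //= IH.
rewrite -{1}[(p * q)%N]add0n big_addn addKn -big_split /=; apply: eq_bigr => j _.
by rewrite big_nat_recr //= mulnC addnC.
Qed.

Lemma coprime_mulr_modn_inj m q k k' : coprime m q -> (k < q)%N -> (k' < q)%N ->
  (k * m == k' * m %[mod q])%N -> k = k'.
Proof.
move=> co_mq kq k'q; wlog le_k'k : k k' kq k'q / (k' <= k)%N.
  move=> W E; case: (leqP k' k) => [le|/ltnW le]; first exact: W.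
  by apply/esym/W; rewrite // eq_sym.
rewrite eqn_mod_dvd ?leq_mul2r ?le_k'k ?orbT // -mulnBl Gauss_dvdl 1?coprime_sym //.
by rewrite /dvdn modn_small => [/eqP|]; lia.
Qed.

Lemma sumr_nat_affine (H : nat -> V) q m s : (0 < q)%N -> coprime m q ->
  (forall x, H (x %% q)%N = H x) ->
  \sum_(0 <= k < q) H (k * m + s)%N = \sum_(0 <= k < q) H k.
Proof.
move=> q_gt0 co_mq Hq; rewrite !big_mkord.
pose h (k : 'I_q) : 'I_q := Ordinal (ltn_pmod (k * m + s) q_gt0).
have h_inj : injective h.
  move=> k k' /(congr1 val) /= /eqP; rewrite eqn_modDr => E.
  exact/val_inj/(coprime_mulr_modn_inj co_mq (ltn_ord k) (ltn_ord k') E).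
by rewrite [RHS](reindex_inj h_inj); apply: eq_bigr => k _; rewrite /= Hq.
Qed.

Lemma sumr_nat_shift (H : nat -> V) q s : (0 < q)%N ->
  (forall x, H (x %% q)%N = H x) ->
  \sum_(0 <= k < q) H (k + s)%N = \sum_(0 <= k < q) H k.
Proof.
move=> q_gt0 Hq; rewrite -(sumr_nat_affine s q_gt0 (coprime1n q) Hq).
by apply: eq_bigr => k _; rewrite muln1.
Qed.
End NatSums.

Lemma coprime_divn_gcd m n : (0 < gcdn m n)%N -> coprime (m %/ gcdn m n) (n %/ gcdn m n).
Proof.
move=> g_gt0; rewrite /coprime -(eqn_pmul2r g_gt0) mul1n muln_gcdl.
by rewrite !divnK ?dvdn_gcdl ?dvdn_gcdr.
Qed.

(* [perm_mackey d] is the permutation module Z[Theta_d], realised as integer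
   functions on Z/d; [evalp f x] reads [f] at the residue of [x] (the junk
   branch [0] is only reached for d = 0). *)
Definition evalp d (f : {ffun 'I_d -> int}) (x : nat) : int :=
  if insub (x %% d)%N is Some i then f i else 0.
Definition fiber_sum d e (G : nat -> int) (x : nat) : int :=
  \sum_(0 <= k < d %/ e) G (x + k * e)%N.

Definition perm_res d e (f : {ffun 'I_e -> int}) : {ffun 'I_d -> int} :=
  [ffun i : 'I_d => evalp f i].
Definition perm_tr d e (f : {ffun 'I_d -> int}) : {ffun 'I_e -> int} :=
  [ffun i : 'I_e => fiber_sum d e (evalp f) i].
Definition perm_cov d (f : {ffun 'I_d -> int}) : {ffun 'I_d -> int} :=
  [ffun i : 'I_d => evalp f i.+1].
Definition perm_con d (f : {ffun 'I_d -> int}) : {ffun 'I_d -> int} :=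
  [ffun i : 'I_d => evalp f (i + d.-1)].
Arguments perm_res : clear implicits.
Arguments perm_tr : clear implicits.
Arguments perm_cov : clear implicits.
Arguments perm_con : clear implicits.
Arguments fiber_sum : clear implicits.

Definition perm_mackey : mackey :=
  @Mackey (fun d => ({ffun 'I_d -> int} : zmodType)) perm_res perm_tr perm_cov perm_con.

Section Evalp.
Variables (d : nat) (d_gt0 : (0 < d)%N).
Implicit Types (f h : {ffun 'I_d -> int}).

Lemma evalp_ffun (G : nat -> int) x : evalp [ffun i : 'I_d => G i] x = G (x %% d)%N.
Proof.
rewrite /evalp; case: insubP => [i _ <-|]; first by rewrite ffunE.
by rewrite ltn_pmod.
Qed.
Lemma evalp_ord f (i : 'I_d) : evalp f i = f i.
Proof. by rewrite /evalp modn_small // valK. Qed.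
Lemma evalp_mod f x : evalp f (x %% d)%N = evalp f x.
Proof. by rewrite /evalp modn_mod. Qed.
Lemma evalp_period f x k : evalp f (x + k * d)%N = evalp f x.
Proof. by rewrite -evalp_mod addnC modnMDl evalp_mod. Qed.
Lemma evalp_modDl f x y : evalp f (x %% d + y)%N = evalp f (x + y)%N.
Proof. by rewrite -evalp_mod modnDml evalp_mod. Qed.
Lemma evalp_inj f h : (forall x, evalp f x = evalp h x) -> f = h.
Proof. by move=> E; apply/ffunP => i; rewrite -!evalp_ord. Qed.
End Evalp.

Lemma evalpB d (f h : {ffun 'I_d -> int}) x : evalp (f - h) x = evalp f x - evalp h x.
Proof. by rewrite /evalp; case: insub => [i|]; rewrite ?subrr // !ffunE. Qed.
Lemma evalp_sum d (I : Type) (r : seq I) (P : pred I) (G : I -> {ffun 'I_d -> int}) x :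
  evalp (\sum_(i <- r | P i) G i) x = \sum_(i <- r | P i) evalp (G i) x.
Proof. by apply: (zmorph_sum (f := fun f => evalp f x)) => f h; apply: evalpB. Qed.
Lemma evalpMn d (f : {ffun 'I_d -> int}) k x : evalp (f *+ k) x = evalp f x *+ k.
Proof. by apply: (zmorphMn (f := fun f => evalp f x)) => f' h; apply: evalpB. Qed.
Lemma evalpMz d (f : {ffun 'I_d -> int}) k x : evalp (f *~ k) x = evalp f x *~ k.
Proof. by apply: (zmorphMz (f := fun f => evalp f x)) => f' h; apply: evalpB. Qed.

Lemma evalp_modn_dvd d e (f : {ffun 'I_e -> int}) x : (e %| d)%N ->
  evalp f (x %% d)%N = evalp f x.
Proof. by move=> ed; rewrite /evalp (modn_dvdm _ ed). Qed.

Lemma periodic_modn_mul (G : nat -> int) d q g a k :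
  (forall y, G (y %% d)%N = G y) -> (q * g = d)%N ->
  G (a + (k %% q) * g)%N = G (a + k * g)%N.
Proof.
move=> Gd qg; rewrite -Gd -[in RHS]Gd; congr G.
by rewrite [in RHS](divn_eq k q) mulnDl -mulnA qg addnCA modnMDl.
Qed.

Lemma fiber_sum_mod (G : nat -> int) d e x : (forall y, G (y %% d)%N = G y) ->
  (e %| d)%N -> (0 < d)%N -> fiber_sum d e G (x %% e)%N = fiber_sum d e G x.
Proof.
move=> Gd ed d_gt0; have e_gt0 : (0 < e)%N by apply: dvdn_gt0 d_gt0 ed.
have q_gt0 : (0 < d %/ e)%N by rewrite divn_gt0 // dvdn_leq.
rewrite /fiber_sum {2}(divn_eq x e).
transitivity (\sum_(0 <= k < d %/ e) G (x %% e + (k + x %/ e) * e)%N).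
  rewrite (@sumr_nat_shift _ (fun k => G (x %% e + k * e)%N)) // => y.
  by apply: periodic_modn_mul Gd _; rewrite divnK.
by apply: eq_bigr => k _; congr G; rewrite mulnDl; lia.
Qed.

Lemma fiber_sumB d e (G H : nat -> int) x :
  fiber_sum d e (fun y => G y - H y) x = fiber_sum d e G x - fiber_sum d e H x.
Proof. by rewrite /fiber_sum -sumrB. Qed.

Section EvalpOps.
Variables (d : nat) (d_gt0 : (0 < d)%N).

Lemma evalp_res e (f : {ffun 'I_e -> int}) x : (e %| d)%N -> evalp (perm_res d e f) x = evalp f x.
Proof. by move=> ed; rewrite evalp_ffun // evalp_modn_dvd. Qed.
Lemma evalp_tr e (f : {ffun 'I_d -> int}) x : (e %| d)%N ->
  evalp (perm_tr d e f) x = fiber_sum d e (evalp f) x.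
Proof.
move=> ed; rewrite evalp_ffun ?(dvdn_gt0 d_gt0 ed) // fiber_sum_mod // => y.
exact: evalp_mod.
Qed.
Lemma evalp_cov (f : {ffun 'I_d -> int}) x : evalp (perm_cov d f) x = evalp f x.+1.
Proof. by rewrite (evalp_ffun d_gt0 (fun i => evalp f i.+1)) -addn1 evalp_modDl // addn1. Qed.
Lemma evalp_iter_cov k (f : {ffun 'I_d -> int}) x :
  evalp (iter k (perm_cov d) f) x = evalp f (x + k)%N.
Proof.
elim: k x => [|k IH] x /=; first by rewrite addn0.
by rewrite evalp_cov IH addSnnS.
Qed.
Lemma evalp_con (f : {ffun 'I_d -> int}) x : evalp (perm_con d f) x = evalp f (x + d.-1)%N.
Proof. by rewrite (evalp_ffun d_gt0 (fun i => evalp f (i + d.-1)%N)) evalp_modDl. Qed.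
End EvalpOps.

Section PermMackey.
Variables (n : nat) (n_gt0 : (0 < n)%N).
Let pos d : (d %| n)%N -> (0 < d)%N := dvdn_gt0 n_gt0.

Lemma perm_tr_tr d e f (x : {ffun 'I_d -> int}) : (f %| e)%N -> (e %| d)%N -> (d %| n)%N ->
  perm_tr e f (perm_tr d e x) = perm_tr d f x.
Proof.
move=> fe ed dn; have en := dvdn_trans ed dn; have fn := dvdn_trans fe en.
apply: evalp_inj => y.
rewrite !evalp_tr ?pos ?(dvdn_trans fe) // /fiber_sum -(divn_mul_divn fe ed).
rewrite mulnC sumr_nat_mul; apply: eq_bigr => j _; rewrite evalp_tr ?pos //.
by apply: eq_bigr => k _; congr evalp; rewrite mulnDl -mulnA divnK //; lia.
Qed.

Lemma perm_res_con d e (x : {ffun 'I_e -> int}) : (e %| d)%N -> (d %| n)%N ->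
  perm_res d e (perm_con e x) = perm_con d (perm_res d e x).
Proof.
move=> ed dn; have d_gt0 := pos dn; have e_gt0 := pos (dvdn_trans ed dn).
apply: evalp_inj => y; rewrite evalp_res // !evalp_con // evalp_res //.
have q_gt0 : (0 < d %/ e)%N by rewrite divn_gt0 // dvdn_leq.
rewrite -[LHS](evalp_period _ _ (d %/ e).-1) //; congr evalp.
by move: (divnK ed) q_gt0; case: (d %/ e)%N => // q; rewrite mulSn => <- _ /=; lia.
Qed.

(* In Z[Theta_d'] the restriction of a transfer is computed fibrewise: the
   fibre of Theta_d -> Theta_e splits into [gcd d d' / e] orbits of length
   [d / gcd d d'], each enumerated by the unit [d' / gcd d d'] of Z/(d / gcd d d'). *)
Lemma perm_res_tr d d' e (x : {ffun 'I_d -> int}) :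
  (e %| d)%N -> (e %| d')%N -> (d %| n)%N -> (d' %| n)%N ->
  perm_res d' e (perm_tr d e x) =
  \sum_(j < (gcdn d d' %/ e)%N)
     perm_tr (lcmn d d') d' (iter (j * e) (perm_cov (lcmn d d')) (perm_res (lcmn d d') d x)).
Proof.
move=> ed ed' dn dn'; have d_gt0 := pos dn; have d'_gt0 := pos dn'.
have L_gt0 : (0 < lcmn d d')%N by rewrite pos // dvdn_lcm dn dn'.
have g_gt0 : (0 < gcdn d d')%N by rewrite gcdn_gt0 d_gt0.
have eg : (e %| gcdn d d')%N by rewrite dvdn_gcd ed ed'.
set q := (d %/ gcdn d d')%N.
have q_gt0 : (0 < q)%N by rewrite divn_gt0 // dvdn_leq // dvdn_gcdl.
apply: evalp_inj => x'.
rewrite evalp_res // evalp_tr ?pos // evalp_sum /fiber_sum.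
rewrite -(divn_mul_divn eg (dvdn_gcdl d d')) mulnC sumr_nat_mul big_mkord.
apply: eq_bigr => j _; rewrite evalp_tr ?dvdn_lcmr // /fiber_sum lcmn_divr //.
pose H k := evalp x (x' + j * e + k * gcdn d d')%N.
have Hq y : H (y %% q)%N = H y.
  apply: (periodic_modn_mul (d := d)); last by rewrite divnK ?dvdn_gcdl.
  by move=> z; apply: evalp_mod.
have co_q : coprime (d' %/ gcdn d d') q by rewrite coprime_sym coprime_divn_gcd.
have := sumr_nat_affine 0 q_gt0 co_q Hq; rewrite /H => E.
transitivity (\sum_(0 <= k < q) evalp x (x' + j * e + k * gcdn d d')%N).
  by apply: eq_bigr => k _; congr evalp; rewrite mulnDl -mulnA divnK //; lia.
rewrite -E; apply: eq_bigr => k _.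
rewrite evalp_iter_cov // evalp_res ?dvdn_lcml // addn0 -mulnA divnK ?dvdn_gcdr //.
by congr evalp; lia.
Qed.

Lemma perm_mackey_Zmodule : is_Zmodule n perm_mackey.
Proof.
split; first split.
- move=> d e ed dn; have d_gt0 := pos dn.
  split=> x y /=; apply: evalp_inj => z.
    by rewrite evalpB !evalp_res // evalpB.
  rewrite evalpB !evalp_tr // -fiber_sumB; apply: eq_bigr => k _; exact: evalpB.
- move=> d dn; have d_gt0 := pos dn; split=> [x y|x y|x|x] /=; apply: evalp_inj => z.
  + by rewrite evalpB !evalp_cov // evalpB.
  + by rewrite evalpB !evalp_con // evalpB.
  + by rewrite evalp_res.
  + by rewrite evalp_tr // /fiber_sum divnn d_gt0 big_nat1 mul0n addn0.
- move=> d e f fe ed dn; split=> x /=; last exact: perm_tr_tr.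
  apply: evalp_inj => y; have fd := dvdn_trans fe ed.
  by rewrite !(evalp_res (pos dn)) // (evalp_res (pos (dvdn_trans ed dn))).
- move=> d dn; have d_gt0 := pos dn; split=> x /=; apply: evalp_inj => y.
  + by rewrite evalp_cov // evalp_con // -[RHS](evalp_period _ _ 1) //; congr evalp; lia.
  + by rewrite evalp_con // evalp_cov // -[RHS](evalp_period _ _ 1) //; congr evalp; lia.
  + by rewrite evalp_iter_cov // -{2}[d]mul1n evalp_period.
- move=> d e ed dn; split=> x /=; last exact: perm_res_con.
  apply: evalp_inj => y.
  rewrite evalp_tr ?pos // evalp_cov ?pos ?(dvdn_trans ed) // evalp_tr ?pos //.
  by apply: eq_bigr => k _; rewrite evalp_cov ?pos // addSn.
split=> [d d' e ed ed' dn dn' x /=|d e ed dn x /=]; first exact: perm_res_tr.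
have d_gt0 := pos dn; apply: evalp_inj => y.
rewrite evalp_tr // evalpMn /fiber_sum.
under eq_bigr do rewrite evalp_res // evalp_period ?pos ?(dvdn_trans ed) //.
by rewrite sumr_const_nat subn0.
Qed.
End PermMackey.

Lemma modn_sub_add_eq0 g r r' : (r < g)%N -> (r' < g)%N ->
  (((g - r) %% g + r') %% g == 0)%N = (r' == r).
Proof.
move=> rg r'g; rewrite modnDml; case: (leqP r r') => le_rr'.
  have -> : (g - r + r' = 1 * g + (r' - r))%N by lia.
  by rewrite modnMDl modn_small; [apply/eqP/eqP; lia | lia].
by rewrite modn_small; [apply/eqP/eqP; lia | lia].
Qed.

Definition delta0 d : {ffun 'I_d -> int} := [ffun i : 'I_d => (nat_of_ord i == 0)%N%:Z].

Lemma evalp_delta0 d x : (0 < d)%N -> evalp (delta0 d) x = (x %% d == 0)%N%:Z.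
Proof. by move=> d_gt0; rewrite (evalp_ffun d_gt0 (fun i => (i == 0)%N%:Z)). Qed.

Lemma fiber_sum_delta0 c g u : (g %| c)%N -> (0 < c)%N ->
  fiber_sum c g (evalp (delta0 c)) u = (u %% g == 0)%N%:Z.
Proof.
move=> gc c_gt0; have g_gt0 : (0 < g)%N := dvdn_gt0 c_gt0 gc.
have q_gt0 : (0 < c %/ g)%N by rewrite divn_gt0 // dvdn_leq.
rewrite -fiber_sum_mod // => [|y]; last exact: evalp_mod.
have ug := ltn_pmod u g_gt0.
rewrite /fiber_sum big_ltn // mul0n addn0 evalp_delta0 // modn_small; last first.
  by apply: leq_trans ug (dvdn_leq c_gt0 gc).
rewrite big_nat_cond big1 ?addr0 // => k /andP [/andP [k_gt0 kq] _].
have : (k.+1 * g <= c)%N by rewrite -(divnK gc) leq_mul2r kq orbT.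
rewrite mulSn => kgc; rewrite evalp_delta0 // modn_small; last by lia.
by case: eqP => // ?; nia.
Qed.

Lemma evalp_con_fixed d (f : {ffun 'I_d -> int}) u : (0 < d)%N ->
  perm_con d f = f -> evalp f u = evalp f 0.
Proof.
move=> d_gt0 fix_f.
have shift y : evalp f (y + d.-1)%N = evalp f y by rewrite -evalp_con // fix_f.
elim: u => // u IH; rewrite -IH -(shift u.+1) -[in RHS](evalp_period _ _ 1) //.
by congr evalp; lia.
Qed.

Section Orbit.
Variables (n c b : nat) (F : mackey) (g : F c).
Hypotheses (Ffree : is_free n g) (n_gt0 : (0 < n)%N) (cn : (c %| n)%N) (bn : (b %| n)%N).
Let HF : is_Zmodule n F := free_Zmodule Ffree.
Let b_gt0 : (0 < b)%N := dvdn_gt0 n_gt0 bn.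
Let c_gt0 : (0 < c)%N := dvdn_gt0 n_gt0 cn.
Let gcd_gt0 : (0 < gcdn b c)%N. Proof. by rewrite gcdn_gt0 b_gt0. Qed.
Let lcm_n : (lcmn b c %| n)%N. Proof. by rewrite dvdn_lcm bn cn. Qed.
Local Notation v := (vgen g b).

Definition vcomb (A : 'I_(gcdn b c) -> int) : F b :=
  \sum_(r < gcdn b c) iter r (cov F b) v *~ A r.

Lemma iter_cov_vgen_gcd : iter (gcdn b c) (cov F b) v = v.
Proof.
have cov_c : iter c (cov F b) v = v.
  rewrite /vgen -(tr_iter_cov HF) ?dvdn_lcml //.
  by rewrite -(res_iter_cov HF) ?dvdn_lcmr // (iter_cov_period HF).
have [kb kc Bezout _] := egcdnP c b_gt0.
rewrite -[in RHS](iter_mul_fix kb (iter_cov_period HF v bn)) Bezout addnC iterD.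
by rewrite iter_mul_fix.
Qed.

Lemma iter_cov_vgen_modn k : iter k (cov F b) v = iter (k %% gcdn b c) (cov F b) v.
Proof.
by rewrite {1}(divn_eq k (gcdn b c)) addnC iterD iter_mul_fix // iter_cov_vgen_gcd.
Qed.

Lemma norm_vcomb : res F b 1 (tr F c 1 g) = vcomb (fun _ => 1).
Proof.
rewrite (res_tr HF) ?dvd1n // divn1 gcdnC lcmnC; apply: eq_bigr => r _.
by rewrite /vgen -(tr_iter_cov HF) ?dvdn_lcml // muln1.
Qed.

Lemma exists_vcomb (y : F b) : exists A, y = vcomb A.
Proof.
have [s ->] := span_all Ffree n_gt0 cn y bn.
exists (fun r : 'I_(gcdn b c) => \sum_(p <- s | (p.1 %% gcdn b c == r)%N) p.2).
transitivity (\sum_(p <- s) \sum_(r < gcdn b c | (p.1 %% gcdn b c == r)%N)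
                iter r (cov F b) v *~ p.2).
  apply: eq_bigr => p _; rewrite (big_pred1 (Ordinal (ltn_pmod p.1 gcd_gt0))) /=.
    by rewrite -iter_cov_vgen_modn.
  by move=> r; rewrite /= eq_sym -val_eqE.
rewrite (exchange_big_dep xpredT) //=; apply: eq_bigr => r _.
by rewrite (zmorph_sum (f := fun a : int => iter r (cov F b) v *~ a)) // => a a'; rewrite mulrzBr.
Qed.

Section DetectCoefficients.
Variable phi : forall d, F d -> perm_mackey d.
Arguments phi : clear implicits.
Hypotheses (Hphi : is_mor n F perm_mackey phi) (phi_g : phi c g = delta0 c).

(* [b / gcd b c] is a unit mod [c / gcd b c], so the fibre sum defining [phi v]
   can be reindexed into a fibre sum over multiples of [gcd b c]. *)
Lemma evalp_phi_vgen u : evalp (phi b v) u = (u %% gcdn b c == 0)%N%:Z.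
Proof.
set g' := gcdn b c; have g'c : (g' %| c)%N by apply: dvdn_gcdr.
rewrite /vgen (mor_tr _ Hphi) ?dvdn_lcml // (mor_res _ Hphi) ?dvdn_lcmr // phi_g.
rewrite evalp_tr ?dvdn_lcml ?(dvdn_gt0 n_gt0) // /fiber_sum.
under eq_bigr do rewrite evalp_res ?(dvdn_gt0 n_gt0) ?dvdn_lcmr //.
rewrite lcmnC lcmn_divr // gcdnC -/g' -(fiber_sum_delta0 _ g'c) //.
have q_gt0 : (0 < c %/ g')%N by rewrite divn_gt0 ?gcd_gt0 // dvdn_leq.
pose H k := evalp (delta0 c) (u + k * g')%N.
have Hq y : H (y %% (c %/ g'))%N = H y.
  by apply: (periodic_modn_mul (d := c)) => [z|]; [apply: evalp_mod | rewrite divnK].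
have := sumr_nat_affine 0 q_gt0 (coprime_divn_gcd gcd_gt0) Hq; rewrite /H /fiber_sum => <-.
by apply: eq_bigr => k _; rewrite addn0 -mulnA divnK // dvdn_gcdl.
Qed.

Lemma evalp_phi_vcomb A (r : 'I_(gcdn b c)) :
  evalp (phi b (vcomb A)) ((gcdn b c - r) %% gcdn b c)%N = A r.
Proof.
rewrite (zmorph_sum (morB Hphi bn)) evalp_sum (bigD1 r) //= big1 ?addr0.
  rewrite (zmorphMz (morB Hphi bn)) evalpMz (mor_iter_cov _ _ Hphi bn) evalp_iter_cov //.
  by rewrite evalp_phi_vgen modn_sub_add_eq0 // eqxx intz.
move=> r' r'r; rewrite (zmorphMz (morB Hphi bn)) evalpMz (mor_iter_cov _ _ Hphi bn).
by rewrite evalp_iter_cov // evalp_phi_vgen modn_sub_add_eq0 // val_eqE (negbTE r'r) mul0rz.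
Qed.
End DetectCoefficients.

Lemma con_fixed_norm_multiple (x : F b) :
  con F b x = x -> exists k : int, x = res F b 1 (tr F c 1 g) *~ k.
Proof.
move=> fix_x; have [A Ax] := exists_vcomb x.
have [phi [Hphi phi_g]] := free_lift Ffree (delta0 c : perm_mackey c) (perm_mackey_Zmodule n_gt0).
have phi_fix : perm_con b (phi b x) = phi b x.
  by rewrite -[in RHS]fix_x (mor_con _ HF (perm_mackey_Zmodule n_gt0) n_gt0 Hphi bn).
have A_const r : A r = A (Ordinal gcd_gt0).
  by rewrite -!(evalp_phi_vcomb Hphi phi_g) -Ax !(evalp_con_fixed _ b_gt0 phi_fix).
exists (A (Ordinal gcd_gt0)); rewrite Ax norm_vcomb /vcomb.
rewrite (zmorph_sum (f := fun y => y *~ A (Ordinal gcd_gt0))) => [|y z]; last exact: mulrzBl.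
by apply: eq_bigr => r _; rewrite A_const.
Qed.

Lemma sub_con_partial_sum k (z := \sum_(0 <= j < k) iter j.+1 (cov F b) v) :
  z - con F b z = iter k (cov F b) v - v.
Proof.
rewrite {}/z; elim: k => [|k IH]; first by rewrite big_geq // (zmorph0 (conB HF bn)) !subrr.
rewrite big_nat_recr //= (zmorphD (conB HF bn)) (con_cov HF) //.
by rewrite opprD addrACA IH addrC addrA subrK.
Qed.

Section Augmentation.
Variable eps : forall d, F d -> Zconst d.
Arguments eps : clear implicits.
Hypotheses (Heps : is_mor n F Zconst eps) (eps_g : eps c g = 1).

Lemma eps_iter_vgen k : eps b (iter k (cov F b) v) = (c %/ gcdn b c)%:Z.
Proof.
rewrite (mor_iter_cov _ _ Heps bn) iter_fix //.
rewrite /vgen (mor_tr _ Heps) ?dvdn_lcml // (mor_res _ Heps) ?dvdn_lcmr // eps_g /=.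
by rewrite lcmnC lcmn_divr // gcdnC -natz.
Qed.

Lemma eps_vcomb A : eps b (vcomb A) = (c %/ gcdn b c)%:Z * \sum_(r < gcdn b c) A r.
Proof.
rewrite (zmorph_sum (morB Heps bn)) mulr_sumr; apply: eq_bigr => r _.
by rewrite (zmorphMz (morB Heps bn)) eps_iter_vgen mulrzz.
Qed.

Lemma eps_dvd (y : F b) : exists k : int, eps b y = (c %/ gcdn b c)%:Z * k.
Proof. by have [A ->] := exists_vcomb y; exists (\sum_r A r); rewrite eps_vcomb. Qed.

Lemma eps_ker (y : F b) : eps b y = 0 -> exists z, y = z - con F b z.
Proof.
have q_gt0 : (0 < c %/ gcdn b c)%N by rewrite divn_gt0 ?gcd_gt0 // dvdn_leq ?dvdn_gcdr.
have [A ->] := exists_vcomb y; rewrite eps_vcomb => /eqP.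
rewrite mulf_eq0 eqz_nat eqn0Ngt q_gt0 /= => /eqP sumA0.
exists (\sum_(r < gcdn b c) (\sum_(0 <= j < r) iter j.+1 (cov F b) v) *~ A r).
rewrite (zmorph_sum (conB HF bn)) -sumrB.
under eq_bigr do rewrite (zmorphMz (conB HF bn)) -mulrzBl sub_con_partial_sum mulrzBl.
rewrite sumrB -(zmorph_sum (f := fun a : int => v *~ a)) => [|a a']; last exact: mulrzBr.
by rewrite sumA0 mulr0z subr0.
Qed.
End Augmentation.
End Orbit.

Lemma sphere_diffE n (F : mackey) b (g : F b) D E : (0 < n)%N -> is_free n g ->
  sphere_diffs n g D E -> forall d y, (d %| n)%N -> D d y = y - con F d y.
Proof.
move=> n_gt0 Ffree [HD Dg _ _] d y dn; have HF := free_Zmodule Ffree.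
by rewrite (free_uniq Ffree HF HD (mor_sub HF (mor_id n F) (con_mor HF)) Dg).
Qed.

Section Main.
Variables (n : nat) (n_odd : odd n) (b c : nat) (bn : (b %| n)%N) (cn : (c %| n)%N)
  (Fb : mackey) (gb : Fb b) (Fb_free : is_free n gb)
  (Fc : mackey) (gc : Fc c) (Fc_free : is_free n gc)
  (Db : forall d, Fb d -> Fb d) (Eb : forall d, Fb d -> Zconst d)
  (HSb : sphere_diffs n gb Db Eb)
  (Dc : forall d, Fc d -> Fc d) (Ec : forall d, Fc d -> Zconst d)
  (HSc : sphere_diffs n gc Dc Ec)
  (I : forall d, Zconst d -> Fc d) (HI : is_Ipi n gc I).
Arguments Db : clear implicits.
Arguments Eb : clear implicits.
Arguments Dc : clear implicits.
Arguments Ec : clear implicits.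
Arguments I : clear implicits.

(* Oddness of [n] is only needed through [0 < n]. *)
Let n_gt0 : (0 < n)%N := odd_gt0 n_odd.
Let HFb : is_Zmodule n Fb := free_Zmodule Fb_free.
Let HFc : is_Zmodule n Fc := free_Zmodule Fc_free.
Let HZ : is_Zmodule n Zconst := Zconst_Zmodule n_gt0.
Let HDb : is_mor n Fb Fb Db. Proof. by case: HSb. Qed.
Let HEb : is_mor n Fb Zconst Eb. Proof. by case: HSb. Qed.
Let HDc : is_mor n Fc Fc Dc. Proof. by case: HSc. Qed.
Let HEc : is_mor n Fc Zconst Ec. Proof. by case: HSc. Qed.
Let HI0 : is_mor n Zconst Fc I. Proof. by case: HI. Qed.
Let Eb_g : Eb b gb = 1. Proof. by case: HSb. Qed.
Let Ec_g : Ec c gc = 1. Proof. by case: HSc. Qed.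
Let Db_eq := sphere_diffE n_gt0 Fb_free HSb.
Let Dc_eq := sphere_diffE n_gt0 Fc_free HSc.
Local Notation q := (c %/ gcdn b c)%N.
Local Notation norm := (res Fc b 1 (tr Fc c 1 gc)).

Lemma q_neq0 : q%:Z != 0.
Proof.
rewrite eqz_nat -lt0n divn_gt0 ?gcdn_gt0 ?(dvdn_gt0 n_gt0 bn) //.
exact/dvdn_leq/dvdn_gcdr/(dvdn_gt0 n_gt0 cn).
Qed.

Lemma Ec_sub_con d y : (d %| n)%N -> Ec d (y - con Fc d y) = 0.
Proof. by move=> dn; rewrite (morB HEc dn) (mor_con _ HFc HZ n_gt0 HEc dn) subrr. Qed.

Lemma I_b : I b 1 = norm.
Proof.
have -> : (1 : Zconst b) = res Zconst b 1 1 by [].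
by rewrite (mor_res _ HI0) ?dvd1n //; case: HI => _ ->.
Qed.

Lemma Ec_I1 : Ec 1%N (I 1%N 1) = (gcdn b c * q)%N%:Z.
Proof.
case: HI => _ ->; rewrite (mor_tr _ HEc) ?dvd1n // Ec_g /= divn1 -natz.
by rewrite mulnC divnK // dvdn_gcdr.
Qed.

Lemma Ec_norm : Ec b norm = (gcdn b c * q)%N%:Z.
Proof. by rewrite (mor_res _ HEc) ?dvd1n // -Ec_I1; case: HI => _ ->. Qed.

Lemma chain_map_con_fixed f2 f1 f0 : is_chain_map n Db Eb Dc Ec f2 f1 f0 ->
  con Fc b (f1 b gb - f2 b gb) = f1 b gb - f2 b gb.
Proof.
case=> _ H1 _ C1 _; apply/eqP; rewrite eq_sym -subr_eq0 -Dc_eq // (morB HDc bn).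
move: (C1 b bn gb); rewrite /mcomp => ->.
by rewrite Db_eq // (morB H1 bn) (mor_con _ HFb HFc n_gt0 H1 bn) -Dc_eq // subrr.
Qed.

Lemma null_homotopic_of_Ec0 f2 f1 f0 : is_chain_map n Db Eb Dc Ec f2 f1 f0 ->
  Ec b (f2 b gb) = 0 -> null_homotopic n Db Eb Dc Ec f2 f1 f0.
Proof.
move=> f_chain Ef2; case: (f_chain) => H2 H1 H0 _ C2.
have [y f2_gb] := eps_ker Fc_free n_gt0 cn bn HEc Ec_g Ef2.
have [k f1_f2] := con_fixed_norm_multiple Fc_free n_gt0 cn bn (chain_map_con_fixed f_chain).
have [h1 [Hh1 h1_gb]] := free_lift Fb_free y HFc.
pose h0 := mscale k I; have Hh0 : is_mor n Zconst Fc h0 := mor_scale HFc k HI0.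
exists h1, h0; split => //.
- apply: (free_uniq Fb_free HFc H2 (mor_comp HDb Hh1)).
  by rewrite /mcomp Db_eq // (morB Hh1 bn) (mor_con _ HFb HFc n_gt0 Hh1 bn) h1_gb -f2_gb.
- apply: (free_uniq Fb_free HFc H1 (mor_add HFc (mor_comp Hh1 HDc) (mor_comp HEb Hh0))).
  by rewrite /madd /mcomp /h0 /mscale h1_gb Eb_g I_b -f1_f2 Dc_eq // -f2_gb addrC subrK.
- apply: (Zconst_mor_uniq H0 (mor_comp Hh0 HEc)).
  rewrite /mcomp /h0 /mscale (zmorphMz (morB HEc (dvd1n n))) Ec_I1 -Ec_norm.
  have := C2 b bn gb; rewrite /mcomp Eb_g.
  have -> : (1 : Zconst b) = res Zconst b 1 1 by [].
  rewrite (mor_res _ H0) ?dvd1n //= => <-.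
  rewrite -[f1 b gb](subrK (f2 b gb)) (zmorphD (morB HEc bn)) Ef2 addr0 f1_f2.
  exact: (zmorphMz (morB HEc bn)).
Qed.

Local Notation g := (gcdn b c).

Lemma bracket_chain_map (m : 'I_g -> int) (w : int) (B : forall d, Fb d -> Fc d) :
  is_angle n gb gc m B -> is_chain_map n Db Eb Dc Ec (bracket2 B I Eb w) B (deg0_map m).
Proof.
case=> HB HBb; have HIE : is_mor n Fb Fc (mcomp I Eb) := mor_comp HEb HI0.
split=> //.
- exact: (mor_add HFc HB (mor_scale HFc w HIE)).
- exact: Zconst_scale_mor.
- move=> d dn x; rewrite /mcomp /bracket2 /madd /mscale Dc_eq // Db_eq //.
  rewrite (morB HB dn) (mor_con _ HFb HFc n_gt0 HB dn) (zmorphD (conB HFc dn)).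
  rewrite (zmorphMz (conB HFc dn)) -(mor_con _ HZ HFc n_gt0 HI0 dn) /=.
  by rewrite opprD addrACA subrr addr0.
- apply: (free_uniq Fb_free HZ (mor_comp HB HEc) (mor_comp HEb (Zconst_scale_mor _ _))).
  by rewrite /mcomp HBb Eb_g /deg0_map (eps_vcomb n_gt0 cn bn HEc Ec_g) mulrzz mul1r.
Qed.

Lemma Ec_bracket (m : 'I_g -> int) (w : int) (B : forall d, Fb d -> Fc d) :
  is_angle n gb gc m B -> Ec b (bracket2 B I Eb w gb) = q%:Z * (\sum_(i < g) m i + g%:Z * w).
Proof.
case=> HB HBb; rewrite /bracket2 /madd /mscale /mcomp (zmorphD (morB HEc bn)) HBb.
rewrite (eps_vcomb n_gt0 cn bn HEc Ec_g) (zmorphMz (morB HEc bn)) Eb_g I_b Ec_norm.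
by rewrite mulrDr mulrzz PoszM mulrCA mulrA.
Qed.

Lemma Ec_null_homotopic f2 f1 f0 : null_homotopic n Db Eb Dc Ec f2 f1 f0 -> Ec b (f2 b gb) = 0.
Proof.
case=> h1 [h0 [Hh1 _ f2_h1 _ _]]; rewrite (f2_h1 b bn gb) /mcomp Db_eq //.
by rewrite (morB Hh1 bn) (mor_con _ HFb HFc n_gt0 Hh1 bn) Ec_sub_con.
Qed.

Lemma chain_map_sub f2 f1 f0 f2' f1' f0' :
  is_chain_map n Db Eb Dc Ec f2 f1 f0 -> is_chain_map n Db Eb Dc Ec f2' f1' f0' ->
  is_chain_map n Db Eb Dc Ec (msub f2 f2') (msub f1 f1') (msub f0 f0').
Proof.
case=> H2 H1 H0 C1 C2 [H2' H1' H0' C1' C2']; split.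
- exact: (mor_sub HFc H2 H2').
- exact: (mor_sub HFc H1 H1').
- exact: (mor_sub HZ H0 H0').
- move=> d dn x; move: (C1 d dn x) (C1' d dn x).
  by rewrite /mcomp /msub (morB HDc dn) => -> ->.
- move=> d dn x; move: (C2 d dn x) (C2' d dn x).
  by rewrite /mcomp /msub (morB HEc dn) => -> ->.
Qed.

Lemma null_homotopic_bracketE (m : 'I_g -> int) (w : int) (B : forall d, Fb d -> Fc d) :
  is_angle n gb gc m B ->
  null_homotopic n Db Eb Dc Ec (bracket2 B I Eb w) B (deg0_map m) <->
  \sum_(i < g) m i + g%:Z * w = 0.
Proof.
move=> HB; split.
  by move/Ec_null_homotopic/eqP; rewrite (Ec_bracket w HB) mulf_eq0 (negbTE q_neq0) => /eqP.
move=> deg0; apply: null_homotopic_of_Ec0; first exact: bracket_chain_map.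
by rewrite (Ec_bracket w HB) deg0 mulr0.
Qed.

Definition degree (f2 : forall d, Fb d -> Fc d) : int :=
  (Ec b (f2 b gb) %/ q%:Z)%Z.

Lemma Ec_degree f2 : Ec b (f2 b gb) = q%:Z * degree f2.
Proof.
rewrite /degree; have [k ->] := eps_dvd Fc_free n_gt0 cn bn HEc Ec_g (f2 b gb).
by rewrite mulKz // q_neq0.
Qed.

Lemma degree_bracket (m : 'I_g -> int) (w : int) (B : forall d, Fb d -> Fc d) :
  is_angle n gb gc m B -> degree (bracket2 B I Eb w) = \sum_(i < g) m i + g%:Z * w.
Proof. by move=> HB; rewrite /degree (Ec_bracket w HB) mulKz // q_neq0. Qed.

Lemma degree_eq_homotopic f2 f1 f0 f2' f1' f0' :
  is_chain_map n Db Eb Dc Ec f2 f1 f0 -> is_chain_map n Db Eb Dc Ec f2' f1' f0' ->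
  degree f2 = degree f2' <-> homotopic n Db Eb Dc Ec f2 f1 f0 f2' f1' f0'.
Proof.
move=> f_chain f'_chain.
have Ec_sub : Ec b (f2 b gb - f2' b gb) = q%:Z * (degree f2 - degree f2').
  by rewrite (morB HEc bn) !Ec_degree mulrBr.
split=> [deg_eq|/Ec_null_homotopic].
  apply: null_homotopic_of_Ec0; first exact: chain_map_sub.
  by rewrite /msub Ec_sub deg_eq subrr mulr0.
by rewrite /msub Ec_sub => /eqP; rewrite mulf_eq0 (negbTE q_neq0) subr_eq0 => /eqP.
Qed.

Lemma degree_add f2 f2' :
  degree (madd f2 f2') = degree f2 + degree f2'.
Proof.
by rewrite {1}/degree /madd (zmorphD (morB HEc bn)) !Ec_degree -mulrDr mulKz // q_neq0.
Qed.

Lemma degree_surj k : exists f2 f1 f0,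
  is_chain_map n Db Eb Dc Ec f2 f1 f0 /\ degree f2 = k.
Proof.
pose m (i : 'I_g) : int := (nat_of_ord i == 0)%N%:Z * k.
have [B [HB B_gb]] := free_lift Fb_free (vcomb gc m) HFc.
have HBm : is_angle n gb gc m B by [].
exists (bracket2 B I Eb 0), B, (deg0_map m); split; first exact: bracket_chain_map.
have g_gt0 : (0 < g)%N by rewrite gcdn_gt0 (dvdn_gt0 n_gt0 bn).
rewrite (degree_bracket 0 HBm) mulr0 addr0 (bigD1 (Ordinal g_gt0)) //= big1 ?addr0.
  by rewrite /m /= mul1r.
by move=> i; rewrite -val_eqE /m /= => /negbTE ->; rewrite mul0r.
Qed.
End Main.

Theorem proposition3p4
  (n : nat) (n_odd : odd n) (b c : nat) (bn : (b %| n)%N) (cn : (c %| n)%N)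
  (Fb : mackey) (gb : Fb b) (Fb_free : is_free n gb)
  (Fc : mackey) (gc : Fc c) (Fc_free : is_free n gc)
  (Db : forall d, Fb d -> Fb d) (Eb : forall d, Fb d -> Zconst d)
  (HSb : sphere_diffs n gb Db Eb)
  (Dc : forall d, Fc d -> Fc d) (Ec : forall d, Fc d -> Zconst d)
  (HSc : sphere_diffs n gc Dc Ec)
  (I : forall d, Zconst d -> Fc d) (HI : is_Ipi n gc I) :
  (* [m,w] is null-homotopic iff sum_i m_i + (b,c) w = 0 *)
  (forall (m : 'I_(gcdn b c) -> int) (w : int) (B : forall d, Fb d -> Fc d),
     is_angle n gb gc m B ->
     (null_homotopic n Db Eb Dc Ec (bracket2 B I Eb w) B (deg0_map m) <->
      \sum_(i < gcdn b c) m i + (gcdn b c)%:Z * w = 0)) /\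
  (* the rule [m,w] |-> sum_i m_i + (b,c) w is a well-defined group
     isomorphism [S^{lambda_b}, S^{lambda_c}] -> Z *)
  (exists Phi : (forall d, Fb d -> Fc d) -> (forall d, Fb d -> Fc d) ->
                (forall d, Zconst d -> Zconst d) -> int,
     [/\ (forall (m : 'I_(gcdn b c) -> int) (w : int) (B : forall d, Fb d -> Fc d),
            is_angle n gb gc m B ->
            Phi (bracket2 B I Eb w) B (deg0_map m) =
              \sum_(i < gcdn b c) m i + (gcdn b c)%:Z * w),
         (forall f2 f1 f0 f2' f1' f0',
            is_chain_map n Db Eb Dc Ec f2 f1 f0 ->
            is_chain_map n Db Eb Dc Ec f2' f1' f0' ->
            (Phi f2 f1 f0 = Phi f2' f1' f0' <->
             homotopic n Db Eb Dc Ec f2 f1 f0 f2' f1' f0')),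
         (forall f2 f1 f0 f2' f1' f0',
            is_chain_map n Db Eb Dc Ec f2 f1 f0 ->
            is_chain_map n Db Eb Dc Ec f2' f1' f0' ->
            Phi (madd f2 f2') (madd f1 f1') (madd f0 f0') =
              Phi f2 f1 f0 + Phi f2' f1' f0') &
         (forall k : int, exists f2 f1 f0,
            is_chain_map n Db Eb Dc Ec f2 f1 f0 /\ Phi f2 f1 f0 = k)]).
Proof.
split=> [m w B HB|]; first exact: (null_homotopic_bracketE n_odd bn cn Fb_free Fc_free HSb HSc HI).
exists (fun f2 _ _ => degree c gb Ec f2); split.
- by move=> m w B HB; exact: (degree_bracket n_odd bn cn HSb HSc HI w HB).
- by move=> *; exact: (degree_eq_homotopic n_odd bn cn Fb_free Fc_free HSb HSc HI).
- by move=> *; exact: (degree_add n_odd bn cn gb Fc_free HSc).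
- exact: (degree_surj n_odd bn cn Fb_free Fc_free HSb HSc HI).
Qed.
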